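(* In the setting described in the context, for each $\hat{i}\in I$ let $t_{\hat{i}}$ be the optimal value and $\alpha^{(\hat{i})}$ an optimal solution of \[ \min_{\alpha}\ \sum_{j\in J}a_{\hat{i}j}\hat{x}_j-\sum_{j\in J_{\hat{i}}}\alpha_{\hat{i}j}|\hat{x}_j|-b_{\hat{i}} \] subject to $\sum_{j\in J}a_{ij}\hat{x}_j-\sum_{j\in J_i}\alpha_{ij}|\hat{x}_j|\ge b_i$ for all $i\in I$, $\alpha\in\Omega$, $\alpha\ge0$. Let $i^*\in\arg\min_{\hat{i}\in I}t_{\hat{i}}$ and $\alpha^*=\alpha^{(i^* )}$. Then the optimal value of RLO-IU-DG is $t_{i^*}$, and there exists an optimal solution of RLO-IU-DG with $\alpha_i=\alpha^*_i$ for all $i\in I$, $c=\bar{a}_{i^*}(\alpha^*_{i^*},\hat{x})$, and $\pi=e_{i^*}$. Moreover, if for every $i\in I$ either $b_i>0$ or $a_{ij}\neq0$ for some $j\in J\setminus J_i$, then this solution satisfies $c\neq0$ and $\bar{a}_i(\alpha_i,x)\neq0$ for all $i\in I$ and all $x\in\mathbb{R}^n$.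
   Context: Let $I=\{1,\dots,m\}$, $J=\{1,\dots,n\}$. Given are $a_{ij}\in\mathbb{R}$ ($i\in I,j\in J$), $b\in\mathbb{R}^m$, nonempty index sets $J_i\subseteq J$ ($i\in I$), an observed point $\hat{x}\in\mathbb{R}^n$, and a convex set $\Omega$ of collections $\alpha=(\alpha_{ij})_{j\in J_i,i\in I}$; $\alpha_i$ denotes $(\alpha_{ij})_{j\in J_i}$. Let $\mathrm{sgn}(t)=1$ if $t\ge0$ and $-1$ otherwise, and $e_i$ the $i$-th unit vector of $\mathbb{R}^m$. For $\alpha_i\ge0$ and $x\in\mathbb{R}^n$, $\bar{a}_i(\alpha_i,x)\in\mathbb{R}^n$ has components $\bar{a}_{ij}(\alpha_i,x)=a_{ij}-\mathrm{sgn}(x_j)\alpha_{ij}$ if $j\in J_i$ and $\bar{a}_{ij}(\alpha_i,x)=a_{ij}$ if $j\in J\setminus J_i$. The problem RLO-IU-DG is \[ \min_{\alpha,c,u,\pi,\lambda,\mu}\ \sum_{j\in J}c_j\hat{x}_j-\sum_{i\in I}b_i\pi_i \] subject to: $\alpha\in\Omega$; $\alpha_{ij}\hat{x}_j+u_{ij}\ge0$ and $-\alpha_{ij}\hat{x}_j+u_{ij}\ge0$ for all $j\in J_i,i\in I$; $\sum_{j\in J}a_{ij}\hat{x}_j-\sum_{j\in J_i}u_{ij}\ge b_i$ for all $i\in I$; $\alpha_{ij}\ge0$ for all $j\in J_i,i\in I$; $\sum_{i\in I}\pi_i=1$; $\sum_{i\in I}a_{ij}\pi_i+\sum_{i\in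 I:j\in J_i}\alpha_{ij}(\lambda_{ij}-\mu_{ij})=c_j$ for all $j\in J$; $\pi_i=\lambda_{ij}+\mu_{ij}$ for all $j\in J_i,i\in I$; $\pi_i,\lambda_{ij},\mu_{ij}\ge0$ for all $j\in J_i,i\in I$. Here $c\in\mathbb{R}^n$, $\pi\in\mathbb{R}^m$, and $u_{ij},\lambda_{ij},\mu_{ij}$ are real variables indexed by $j\in J_i,i\in I$. *)

From HB Require Import structures.
From mathcomp Require Import all_boot all_order all_algebra.
Set Implicit Arguments. Unset Strict Implicit. Unset Printing Implicit Defensive.
Import Order.TTheory GRing.Theory Num.Theory.
Local Open Scope ring_scope.

Section RLO.
Variables (R : realFieldType) (m n : nat).

Definition sgn (t : R) : R := if 0 <= t then 1 else -1.

(* \bar a_i(alpha_i, x): ai = row i of a, Ji = J_i, ali = alpha_i *)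
Definition abar (ai : 'I_n -> R) (Ji : {set 'I_n}) (ali : 'I_n -> R)
  (x : 'I_n -> R) : 'I_n -> R :=
  fun j => if j \in Ji then ai j - sgn (x j) * ali j else ai j.

Definition unitv (i : 'I_m) : 'I_m -> R := fun k => if k == i then 1 else 0.

Definition convex_set (Omega : ('I_m -> 'I_n -> R) -> Prop) : Prop :=
  forall al1 al2 (t : R), Omega al1 -> Omega al2 -> 0 <= t -> t <= 1 ->
    Omega (fun i j => t * al1 i j + (1 - t) * al2 i j).

Variables (a : 'I_m -> 'I_n -> R) (b : 'I_m -> R) (J : 'I_m -> {set 'I_n})
  (xhat : 'I_n -> R) (Omega : ('I_m -> 'I_n -> R) -> Prop).

Definition rlo_feasible (al : 'I_m -> 'I_n -> R) (c : 'I_n -> R)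
  (u : 'I_m -> 'I_n -> R) (pi : 'I_m -> R) (lam mu : 'I_m -> 'I_n -> R) : Prop :=
  Omega al /\
  (forall i j, j \in J i ->
     0 <= al i j * xhat j + u i j /\ 0 <= - al i j * xhat j + u i j) /\
  (forall i, b i <= \sum_(j < n) a i j * xhat j - \sum_(j in J i) u i j) /\
  (forall i j, j \in J i -> 0 <= al i j) /\
  \sum_(i < m) pi i = 1 /\
  (forall j, \sum_(i < m) a i j * pi i
             + \sum_(i < m | j \in J i) al i j * (lam i j - mu i j) = c j) /\
  (forall i j, j \in J i -> pi i = lam i j + mu i j) /\
  (forall i, 0 <= pi i) /\
  (forall i j, j \in J i -> 0 <= lam i j /\ 0 <= mu i j).

Definition rlo_obj (c : 'I_n -> R) (pi : 'I_m -> R) : R :=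
  \sum_(j < n) c j * xhat j - \sum_(i < m) b i * pi i.

Definition sub_feasible (al : 'I_m -> 'I_n -> R) : Prop :=
  [/\ (forall i, b i <= \sum_(j < n) a i j * xhat j
                        - \sum_(j in J i) al i j * `|xhat j|),
      Omega al &
      (forall i j, j \in J i -> 0 <= al i j)].

Definition sub_obj (ih : 'I_m) (al : 'I_m -> 'I_n -> R) : R :=
  \sum_(j < n) a ih j * xhat j - \sum_(j in J ih) al ih j * `|xhat j| - b ih.

Definition sub_optimal (ih : 'I_m) (al : 'I_m -> 'I_n -> R) : Prop :=
  sub_feasible al /\ forall al', sub_feasible al' -> sub_obj ih al <= sub_obj ih al'.

End RLO.

From HB Require Import structures.
From mathcomp Require Import all_boot all_order all_algebra.
From mathcomp Require Import ring lra.
Import Order.TTheory GRing.Theory Num.Theory.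
Set Implicit Arguments.
Unset Strict Implicit.
Unset Printing Implicit Defensive.
Local Open Scope ring_scope.

(* Every feasible point (alpha, c, u, pi, lambda, mu) of RLO-IU-DG gives a
   feasible alpha of the subproblems (u_ij bounds alpha_ij |x_j|), and since
   |lambda_ij - mu_ij| <= pi_i its objective dominates the pi-weighted mixture
   of the subproblem objectives at alpha, hence the minimum t_{i*}.
   Conversely pi = e_{i*}, c = abar_{i*}, u_ij = alpha_ij |x_j| and the split
   of pi_{i*} into lambda, mu according to the sign of x_j attain t_{i*}.
   If abar_i(alpha_i, x) = 0, then a_i x <= sum_j alpha_ij |x_j|, so primal
   feasibility forces b_i <= 0. *)

Section RealFieldFacts.
Variable R : realFieldType.

Lemma sgnM_norm (x : R) : sgn x * x = `|x|.
Proof.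
rewrite /sgn; case: ifP => x_ge0; first by rewrite mul1r ger0_norm.
by rewrite ltr0_norm ?mulN1r // ltNge x_ge0.
Qed.

Lemma norm_sgn (x : R) : `|sgn x| = 1.
Proof. by rewrite /sgn; case: ifP; rewrite ?normrN normr1. Qed.

Lemma ler_mixture (I : finType) (w F : I -> R) (t : R) :
  (forall i, 0 <= w i) -> \sum_i w i = 1 -> (forall i, t <= F i) ->
  t <= \sum_i w i * F i.
Proof.
move=> w_ge0 w_sum1 t_leF.
rewrite -[t]mul1r -w_sum1 mulr_suml.
by apply: ler_sum => i _; rewrite ler_wpM2l.
Qed.

Lemma dual_term_ge (al l mu x : R) :
  0 <= al -> 0 <= l -> 0 <= mu ->
  - ((l + mu) * (al * `|x|)) <= al * (l - mu) * x.
Proof.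
move=> al_ge0 l_ge0 mu_ge0.
suff : `|al * (l - mu) * x| <= (l + mu) * (al * `|x|).
  by rewrite ler_norml => /andP[].
rewrite !normrM (ger0_norm al_ge0) mulrCA -mulrA ler_wpM2l // ler_wpM2r //.
by apply: le_trans (ler_normB _ _) _; rewrite !ger0_norm.
Qed.

End RealFieldFacts.

Section AbarRow.
Variables (R : realFieldType) (n : nat).
Variables (ai : 'I_n -> R) (Ji : {set 'I_n}) (ali : 'I_n -> R).

Lemma abar_dotE (x : 'I_n -> R) :
  \sum_j abar ai Ji ali x j * x j =
  \sum_j ai j * x j - \sum_(j in Ji) ali j * `|x j|.
Proof.
rewrite [\sum_(j in Ji) _]big_mkcond -sumrB; apply: eq_bigr => j _.
rewrite /abar; case: ifP => _; last by rewrite subr0.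
by rewrite -sgnM_norm; ring.
Qed.

Lemma dot_le_of_abar0 (x y : 'I_n -> R) :
  (forall j, j \in Ji -> 0 <= ali j) -> (forall j, abar ai Ji ali x j = 0) ->
  \sum_j ai j * y j <= \sum_(j in Ji) ali j * `|y j|.
Proof.
move=> ali_ge0 abar0; rewrite [X in _ <= X]big_mkcond /=.
apply: ler_sum => j _; have := abar0 j; rewrite /abar.
case: ifP => [j_in | _ ->]; last by rewrite mul0r.
move/eqP; rewrite subr_eq0 => /eqP ->.
apply: le_trans (ler_norm _) _.
by rewrite !normrM norm_sgn mul1r ger0_norm ?ali_ge0.
Qed.

End AbarRow.

Lemma sum_mul_unitv (R : realFieldType) (m : nat) (P : pred 'I_m)
    (F : 'I_m -> R) (i0 : 'I_m) :
  \sum_(i | P i) F i * unitv R i0 i = if P i0 then F i0 else 0.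
Proof.
rewrite big_mkcond (bigD1 i0) //= /unitv eqxx big1 ?addr0.
  by case: ifP; rewrite ?mulr1.
by move=> i /negbTE ->; case: ifP; rewrite ?mulr0.
Qed.

Section RLOIUDG.
Variables (R : realFieldType) (m n : nat).
Variables (a : 'I_m -> 'I_n -> R) (b : 'I_m -> R) (J : 'I_m -> {set 'I_n}).
Variables (xhat : 'I_n -> R) (Omega : ('I_m -> 'I_n -> R) -> Prop).

Lemma rlo_obj_unitv (i0 : 'I_m) (al : 'I_m -> 'I_n -> R) :
  rlo_obj b xhat (abar (a i0) (J i0) (al i0) xhat) (unitv R i0) =
  sub_obj a b J xhat i0 al.
Proof. by rewrite /rlo_obj abar_dotE sum_mul_unitv. Qed.

Lemma rlo_feasible_unitv (i0 : 'I_m) (al : 'I_m -> 'I_n -> R) :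
  sub_feasible a b J xhat Omega al ->
  exists u lam mu, rlo_feasible a b J xhat Omega al
    (abar (a i0) (J i0) (al i0) xhat) u (unitv R i0) lam mu.
Proof.
case=> al_le Omega_al al_ge0.
exists (fun i j => al i j * `|xhat j|),
  (fun i j => unitv R i0 i * (if 0 <= xhat j then 0 else 1)),
  (fun i j => unitv R i0 i * (if 0 <= xhat j then 1 else 0)).
have unitv_ge0 i : 0 <= unitv R i0 i by rewrite /unitv; case: ifP.
refine (conj Omega_al (conj _ (conj _ (conj al_ge0
  (conj _ (conj _ (conj _ (conj _ _)))))))).
- move=> i j j_in.
  have : `|al i j * xhat j| <= al i j * `|xhat j|.
    by rewrite normrM ger0_norm ?al_ge0.
  by rewrite ler_norml mulNr => /andP[lo hi]; split; lra.
- by move=> i; apply: al_le.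
- by under eq_bigr do rewrite -[unitv _ _ _]mul1r; rewrite sum_mul_unitv.
- move=> j; under [X in _ + X]eq_bigr do rewrite -mulrBr mulrCA mulrC.
  rewrite !sum_mul_unitv /abar /sgn /=.
  by case: ifP => _; [case: ifP => _ |]; ring.
- by move=> i j _; case: ifP => _; ring.
- exact: unitv_ge0.
- by move=> i j _; split; apply: mulr_ge0 => //; case: ifP.
Qed.

Section Feasible.
Variables (al : 'I_m -> 'I_n -> R) (c : 'I_n -> R) (u : 'I_m -> 'I_n -> R).
Variables (pi : 'I_m -> R) (lam mu : 'I_m -> 'I_n -> R).
Hypothesis feas : rlo_feasible a b J xhat Omega al c u pi lam mu.

Lemma sub_feasible_of_rlo : sub_feasible a b J xhat Omega al.
Proof.
have [Omega_al [u_bound [b_le [al_ge0 _]]]] := feas.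
split=> // i; apply: le_trans (b_le i) _; rewrite lerD2l lerN2.
apply: ler_sum => j j_in; have [lo hi] := u_bound i j j_in.
have : `|al i j * xhat j| <= u i j.
  by rewrite ler_norml; apply/andP; split; lra.
by rewrite normrM ger0_norm ?al_ge0.
Qed.

Lemma rlo_obj_ge_mixture :
  \sum_i pi i * sub_obj a b J xhat i al <= rlo_obj b xhat c pi.
Proof.
have [_ [_ [_ [al_ge0 [_ [c_def [pi_split [_ lam_mu_ge0]]]]]]]] := feas.
have dual_dot : \sum_j c j * xhat j =
    \sum_i pi i * \sum_j a i j * xhat j +
    \sum_i \sum_(j in J i) al i j * (lam i j - mu i j) * xhat j.
  under eq_bigr do rewrite -c_def mulrDl.
  rewrite big_split /=; congr (_ + _).
    under eq_bigr do rewrite mulr_suml; rewrite exchange_big /=.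
    by apply: eq_bigr => i _; rewrite mulr_sumr; apply: eq_bigr => j _; ring.
  under eq_bigr do rewrite mulr_suml big_mkcond /=; rewrite exchange_big /=.
  apply: eq_bigr => i _; rewrite [RHS]big_mkcond /=.
  by apply: eq_bigr => j _; case: ifP; rewrite ?mul0r.
rewrite /rlo_obj dual_dot /sub_obj.
under eq_bigr do rewrite mulrBr mulrBr [pi _ * b _]mulrC.
rewrite !sumrB lerD2r lerD2l -sumrN; apply: ler_sum => i _.
rewrite mulr_sumr -sumrN; apply: ler_sum => j j_in.
have [lam_ge0 mu_ge0] := lam_mu_ge0 i j j_in.
by rewrite (pi_split i j j_in) dual_term_ge ?al_ge0.
Qed.

Lemma rlo_obj_ge (t : R) :
  (forall i al', sub_feasible a b J xhat Omega al' -> t <= sub_obj a b J xhat i al') ->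
  t <= rlo_obj b xhat c pi.
Proof.
have [_ [_ [_ [_ [pi_sum1 [_ [_ [pi_ge0 _]]]]]]]] := feas.
move=> t_le_sub; apply: le_trans rlo_obj_ge_mixture.
by apply: ler_mixture => // i; apply: t_le_sub sub_feasible_of_rlo.
Qed.

End Feasible.

Lemma abar_neq0 (al : 'I_m -> 'I_n -> R) (i : 'I_m) (x : 'I_n -> R) :
  sub_feasible a b J xhat Omega al ->
  (0 < b i \/ exists j, j \notin J i /\ a i j != 0) ->
  ~ (forall j, abar (a i) (J i) (al i) x j = 0).
Proof.
move=> [al_le _ al_ge0] [b_gt0 | [j [j_out aij_neq0]]] abar0; last first.
  by move: aij_neq0; rewrite -(abar0 j) /abar (negbTE j_out) eqxx.
have := dot_le_of_abar0 xhat (al_ge0 i) abar0.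
by have := al_le i; lra.
Qed.

End RLOIUDG.

Unset Implicit Arguments.

Theorem theorem3 (R : realFieldType) (m n : nat)
  (a : 'I_m -> 'I_n -> R) (b : 'I_m -> R) (J : 'I_m -> {set 'I_n})
  (xhat : 'I_n -> R) (Omega : ('I_m -> 'I_n -> R) -> Prop)
  (alopt : 'I_m -> ('I_m -> 'I_n -> R)) (istar : 'I_m) :
  (forall i, J i != set0) ->
  convex_set Omega ->
  (forall ih, sub_optimal a b J xhat Omega ih (alopt ih)) ->
  (forall ih, sub_obj a b J xhat istar (alopt istar)
              <= sub_obj a b J xhat ih (alopt ih)) ->
  let t := sub_obj a b J xhat istar (alopt istar) in
  let alstar := alopt istar in
  let cstar := abar (a istar) (J istar) (alstar istar) xhat in
  [/\ (exists u lam mu,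
         rlo_feasible a b J xhat Omega alstar cstar u (unitv R istar) lam mu
         /\ rlo_obj b xhat cstar (unitv R istar) = t),
      (forall al c u pi lam mu,
         rlo_feasible a b J xhat Omega al c u pi lam mu ->
         t <= rlo_obj b xhat c pi) &
      ((forall i, 0 < b i \/ exists j, j \notin J i /\ a i j != 0) ->
         ~ (forall j, cstar j = 0) /\
         (forall i (x : 'I_n -> R),
            ~ (forall j, abar (a i) (J i) (alstar i) x j = 0)))].
Proof.
move=> _ _ alopt_opt istar_min t alstar cstar.
have [alstar_feas _] := alopt_opt istar.
split.
- have [u [lam [mu feas]]] := rlo_feasible_unitv istar alstar_feas.
  by exists u, lam, mu; split; last exact: rlo_obj_unitv.
- move=> al c u pi lam mu feas; apply: (rlo_obj_ge feas) => i al' al'_feas.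
  exact: le_trans (istar_min i) ((alopt_opt i).2 al' al'_feas).
- move=> nondeg; split; first exact: abar_neq0 alstar_feas (nondeg istar).
  by move=> i x; apply: abar_neq0 alstar_feas (nondeg i).
Qed.
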